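(* Let $A$ be a Noetherian ring, $\mathcal{R}$ a standard graded ring with $\mathcal{R}_0=A$, and $X\in\operatorname{^*Mod}_f(\mathcal{R})$. Assume $\operatorname{Ass}_A X$ is finite and that there is $m$ such that $\operatorname{Ass}_A H^0_{\mathcal{R}_+}(X)_n=\operatorname{Ass}_A H^0_{\mathcal{R}_+}(X)_m$ for all $n\ge m$. Then there exists $n_0$ such that $\operatorname{Ass}_A X_n=\operatorname{Ass}_A X_{n_0}$ for all $n\ge n_0$.
   Context: A standard graded ring $\mathcal{R}=\bigoplus_{n\ge0}\mathcal{R}_n$ with $\mathcal{R}_0=A$ is a Noetherian $\mathbb{N}$-graded commutative ring generated as an $A$-algebra by finitely many elements of $\mathcal{R}_1$; $\mathcal{R}_+=\bigoplus_{n\ge1}\mathcal{R}_n$. $\operatorname{^*Mod}_f(\mathcal{R})$ is the full subcategory of graded $\mathcal{R}$-modules $X=\bigoplus_{n\in\mathbb{Z}}X_n$ with every $X_n$ a finitely generated $A$-module and $X_n=0$ for $n\ll0$. $H^0_{\mathcal{R}_+}(X)=\{x\in X:\mathcal{R}_+^k x=0\text{ for some }k\}$. $\operatorname{Ass}_A X$ denotes the associated primes of $X$ regarded as an $A$-module. *)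

From HB Require Import structures.
From mathcomp Require Import all_boot all_order all_algebra.
Set Implicit Arguments. Unset Strict Implicit. Unset Printing Implicit Defensive.
Import Order.TTheory GRing.Theory Num.Theory.
Local Open Scope ring_scope.

(* Subsets are Prop-valued predicates; ideals/primes are compared
   extensionally (as sets). *)

Definition is_ideal (A : comNzRingType) (I : A -> Prop) : Prop :=
  [/\ I 0, (forall a b, I a -> I b -> I (a + b)) & (forall a b, I b -> I (a * b))].

Definition fg_ideal (A : comNzRingType) (I : A -> Prop) : Prop :=
  exists s : seq A, forall a, I a <->
    exists c : nat -> A, a = \sum_(i < size s) c i * s`_i.

Definition noetherian (A : comNzRingType) : Prop :=
  forall I : A -> Prop, is_ideal I -> fg_ideal I.

Definition prime_ideal (A : comNzRingType) (p : A -> Prop) : Prop :=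
  [/\ is_ideal p, ~ p 1 & forall a b, p (a * b) -> p a \/ p b].

Definition graded_ring (R : comNzRingType) (Rg : nat -> R -> Prop) : Prop :=
  [/\ (forall n, Rg n 0 /\ (forall x y, Rg n x -> Rg n y -> Rg n (x - y))),
      Rg 0%N 1,
      (forall m n a b, Rg m a -> Rg n b -> Rg (m + n)%N (a * b)),
      (forall r, exists N (f : nat -> R), (forall i, Rg i (f i)) /\ r = \sum_(i < N) f i)
    & (forall N (f : nat -> R), (forall i, Rg i (f i)) -> \sum_(i < N) f i = 0 ->
          forall i, (i < N)%N -> f i = 0)].

Definition in_subalg (A R : comNzRingType) (phi : {rmorphism A -> R}) (s : seq R) (r : R) : Prop :=
  forall S : R -> Prop,
    (forall a, S (phi a)) -> (forall i, (i < size s)%N -> S s`_i) ->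
    (forall x y, S x -> S y -> S (x + y)) -> (forall x y, S x -> S y -> S (x * y)) ->
    S r.

(** R is a standard graded ring with R_0 = A (A identified with R_0 via the
    injective ring morphism phi whose image is exactly Rg 0). *)
Definition standard_graded (A R : comNzRingType) (phi : {rmorphism A -> R})
    (Rg : nat -> R -> Prop) : Prop :=
  [/\ graded_ring Rg, noetherian R,
      injective phi, (forall r, Rg 0%N r <-> exists a, r = phi a)
    & exists s : seq R, (forall i, (i < size s)%N -> Rg 1%N s`_i) /\
        forall r, in_subalg phi s r].

Definition Rplus (R : comNzRingType) (Rg : nat -> R -> Prop) (r : R) : Prop :=
  exists N (f : nat -> R), [/\ forall i, Rg i (f i), f 0%N = 0 & r = \sum_(i < N) f i].

Definition graded_module (R : comNzRingType) (Rg : nat -> R -> Prop)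
    (X : lmodType R) (Xg : int -> X -> Prop) : Prop :=
  [/\ (forall n, Xg n 0 /\ (forall x y, Xg n x -> Xg n y -> Xg n (x - y))),
      (forall (m : nat) (n : int) r x, Rg m r -> Xg n x -> Xg (m%:Z + n) (r *: x)),
      (forall x : X, exists s : seq int, uniq s /\
          exists f : int -> X, (forall i, Xg i (f i)) /\ x = \sum_(i <- s) f i)
    & (forall (s : seq int) (f : int -> X), uniq s -> (forall i, Xg i (f i)) ->
          \sum_(i <- s) f i = 0 -> forall i, i \in s -> f i = 0)].

Definition fg_Amodule (A R : comNzRingType) (phi : {rmorphism A -> R}) (X : lmodType R)
    (S : X -> Prop) : Prop :=
  exists g : seq X, (forall i, (i < size g)%N -> S g`_i) /\
    forall x, S x <-> exists c : nat -> A, x = \sum_(i < size g) phi (c i) *: g`_i.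

Definition starModf (A R : comNzRingType) (phi : {rmorphism A -> R}) (Rg : nat -> R -> Prop)
    (X : lmodType R) (Xg : int -> X -> Prop) : Prop :=
  [/\ graded_module Rg Xg,
      (forall n, fg_Amodule phi (Xg n))
    & exists n1 : int, forall n : int, n < n1 -> forall x, Xg n x -> x = 0].

(** H^0_{R_+}(X) = { x | R_+^k x = 0 for some k }; R_+^k x = 0 means that
    every product of k elements of R_+ (the generators of R_+^k) kills x. *)
Definition H0 (R : comNzRingType) (Rg : nat -> R -> Prop) (X : lmodType R) (x : X) : Prop :=
  exists k : nat, forall rs : seq R, size rs = k ->
    (forall i, (i < size rs)%N -> Rplus Rg rs`_i) -> (\prod_(r <- rs) r) *: x = 0.

Definition isAss (A R : comNzRingType) (phi : {rmorphism A -> R}) (X : lmodType R)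
    (S : X -> Prop) (p : A -> Prop) : Prop :=
  prime_ideal p /\ exists x, S x /\ forall a, p a <-> phi a *: x = 0.

Definition Ass_finite (A R : comNzRingType) (phi : {rmorphism A -> R}) (X : lmodType R)
    (S : X -> Prop) : Prop :=
  exists (N : nat) (L : nat -> A -> Prop), forall p, isAss phi S p ->
    exists i, (i < N)%N /\ forall a, p a <-> L i a.

Definition Ass_eq (A R : comNzRingType) (phi : {rmorphism A -> R}) (X : lmodType R)
    (S T : X -> Prop) : Prop :=
  forall p : A -> Prop, isAss phi S p <-> isAss phi T p.

From HB Require Import structures.
From mathcomp Require Import all_boot all_order all_algebra.
Set Implicit Arguments. Unset Strict Implicit. Unset Printing Implicit Defensive.
Import Order.TTheory GRing.Theory Num.Theory.
Local Open Scope ring_scope.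
From Stdlib Require Import Classical FunctionalExtensionality PropExtensionality.
From mathcomp Require Import ring.

(* Each prime p of A is eventually always or eventually never an associated
   prime of X_n.  Indeed, let p = ann_A(x) with x in X_n and p not associated
   to H^0_{R_+}(X)_n, and suppose p is not associated to X_{n+k}.  Then every
   u in R_k satisfies t u x = 0 for some t outside p (otherwise ann_A(u x) = p),
   so the ideal generated by R_k, which contains R_+^k because R is standard
   graded, is killed by a single t outside p (R is Noetherian).  Then t x lies
   in H^0_{R_+}(X)_n and has annihilator p, a contradiction.  Since
   Ass_A X is finite, a common bound works for all primes. *)

Section IdealSpan.
Variable R : comNzRingType.

Definition ideal_span (S : R -> Prop) (r : R) : Prop :=
  forall I : R -> Prop, is_ideal I -> (forall u, S u -> I u) -> I r.

Lemma ideal_span_ideal S : is_ideal (ideal_span S).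
Proof.
split=> [I [I0 _ _] _ //|a b Ha Hb I HI SI|a b Hb I HI SI]; case: (HI) => _ Iadd Imul.
- by apply: Iadd; [exact: Ha | exact: Hb].
- by apply: Imul; exact: Hb.
Qed.

Lemma ideal_span_sub S u : S u -> ideal_span S u.
Proof. by move=> Su I _; apply. Qed.

Lemma ideal_sum (I : R -> Prop) N (f : nat -> R) :
  is_ideal I -> (forall i, (i < N)%N -> I (f i)) -> I (\sum_(i < N) f i).
Proof. by move=> [I0 Iadd _] If; apply: (big_ind I) => // i _; apply: If. Qed.

Lemma ideal_span_mul (S T U : R -> Prop) :
    (forall u v, S u -> T v -> U (u * v)) ->
  forall u v, ideal_span S u -> ideal_span T v -> ideal_span U (u * v).
Proof.
move=> STU u v Su Tv I HI UI; case: (HI) => I0 Iadd Imul.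
suff: forall u, ideal_span S u -> I (u * v) by apply.
apply: (Tv (fun v => forall u, ideal_span S u -> I (u * v))).
- split=> [u' _|a b Ha Hb u' Su'|c b Hb u' Su'].
  + by rewrite mulr0.
  + by rewrite mulrDr; apply: Iadd; [exact: Ha | exact: Hb].
  + by rewrite mulrCA; apply: Imul; exact: Hb.
- move=> w Tw u' Su'; apply: (Su' (fun u => I (u * w))).
  + split=> [|a b Ha Hb|c b Hb]; first by rewrite mul0r.
    * by rewrite mulrDl; apply: Iadd.
    * by rewrite -mulrA; apply: Imul.
  + by move=> z Sz; apply: UI; apply: STU.
Qed.

End IdealSpan.

Lemma sum_widen_mkcond (R : nmodType) (f : nat -> R) N M : (N <= M)%N ->
  \sum_(i < N) f i = \sum_(i < M) (if (i < N)%N then f i else 0).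
Proof. by move=> NM; rewrite (big_ord_widen M f NM) big_mkcond. Qed.

Section GradedRing.
Variables (R : comNzRingType) (Rg : nat -> R -> Prop).
Hypothesis gR : graded_ring Rg.

Lemma graded0 i : Rg i 0.
Proof. by case: gR => Hsub _ _ _ _; apply: (Hsub i).1. Qed.

Lemma gradedB i x y : Rg i x -> Rg i y -> Rg i (x - y).
Proof. by case: gR => Hsub _ _ _ _; apply: (Hsub i).2. Qed.

Lemma gradedD i x y : Rg i x -> Rg i y -> Rg i (x + y).
Proof.
move=> Hx Hy; rewrite -[y]opprK; apply: gradedB => //.
by rewrite -sub0r; apply: gradedB => //; apply: graded0.
Qed.

Lemma graded_mkcond (f : nat -> R) N :
  (forall i, Rg i (f i)) -> forall i, Rg i (if (i < N)%N then f i else 0).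
Proof. by move=> Hf i; case: ifP => _; [apply: Hf | apply: graded0]. Qed.

Definition deg0_comp (r c : R) : Prop :=
  exists N (f : nat -> R),
    [/\ (0 < N)%N, forall i, Rg i (f i), r = \sum_(i < N) f i & f 0%N = c].

Lemma deg0_comp_unique r c c' : deg0_comp r c -> deg0_comp r c' -> c = c'.
Proof.
case=> N [f [N0 Hf Hr <-]] [N' [g [N0' Hg Hr' <-]]].
have [_ _ _ _ Huniq] := gR.
pose F i := (if (i < N)%N then f i else 0) - (if (i < N')%N then g i else 0).
have HF i : Rg i (F i) by apply: gradedB; apply: graded_mkcond.
have F0 : \sum_(i < N + N') F i = 0.
  rewrite sumrB -(sum_widen_mkcond f (leq_addr N' N)).
  by rewrite -(sum_widen_mkcond g (leq_addl N N')) -Hr -Hr' subrr.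
have := Huniq (N + N')%N F HF F0 0%N (ltn_addr _ N0).
by rewrite /F N0 N0' => /subr0_eq.
Qed.

Lemma deg0_compD r c r' c' :
  deg0_comp r c -> deg0_comp r' c' -> deg0_comp (r + r') (c + c').
Proof.
case=> N [f [N0 Hf Hr <-]] [N' [g [N0' Hg Hr' <-]]].
exists (N + N')%N,
  (fun i => (if (i < N)%N then f i else 0) + (if (i < N')%N then g i else 0)).
split; first exact: ltn_addr.
- by move=> i; apply: gradedD; apply: graded_mkcond.
- rewrite big_split /= -(sum_widen_mkcond f (leq_addr N' N)).
  by rewrite -(sum_widen_mkcond g (leq_addl N N')) Hr Hr'.
- by rewrite /= N0 N0'.
Qed.

Lemma deg0_comp_deg0 c : Rg 0%N c -> deg0_comp c c.
Proof.
move=> Hc; exists 1%N, (fun i => if i == 0%N then c else 0); split => //.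
- by case=> [|i] //=; apply: graded0.
- by rewrite big_ord1.
Qed.

Lemma deg0_comp_homog i u : (0 < i)%N -> Rg i u -> deg0_comp u 0.
Proof.
move=> i_gt0 Hu; exists i.+1, (fun j => if j == i then u else 0); split => //.
- by move=> j; case: eqP => [->|_] //; apply: graded0.
- by rewrite big_ord_recr /= eqxx big1 ?add0r // => j _; rewrite ltn_eqF.
- by rewrite eq_sym; move: i_gt0; rewrite lt0n => /negbTE ->.
Qed.

Lemma deg0_comp_mul_deg1 r v : Rg 1%N v -> deg0_comp (r * v) 0.
Proof.
have [_ _ Hmul Hdec _] := gR.
move=> Hv; have [N [f [Hf ->]]] := Hdec r.
exists N.+1, (fun j => if j is j'.+1 then f j' * v else 0); split => //.
- by case=> [|j]; [apply: graded0 | rewrite -addn1; apply: Hmul].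
- by rewrite big_ord_recl /= add0r mulr_suml.
Qed.

(* The elements all of whose multiples have zero degree-0 component form an
   ideal containing R_1. *)
Lemma deg1_span_deg0_comp w : ideal_span (Rg 1) w -> deg0_comp w 0.
Proof.
move=> Hw; rewrite -[w]mul1r; move: 1; apply: (Hw (fun w => forall r, deg0_comp (r * w) 0)).
- split=> [r|x y Hx Hy r|c y Hy r].
  + by rewrite mulr0; apply: deg0_comp_deg0; apply: graded0.
  + by rewrite mulrDr -[0]addr0; apply: deg0_compD.
  + by rewrite mulrA; apply: Hy.
- by move=> v Hv r; apply: deg0_comp_mul_deg1.
Qed.

End GradedRing.

Section StandardGraded.
Variables (A R : comNzRingType) (phi : {rmorphism A -> R}) (Rg : nat -> R -> Prop).
Hypothesis Hstd : standard_graded phi Rg.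

Lemma deg0_plus_deg1_span r : exists c, Rg 0%N c /\ ideal_span (Rg 1) (r - c).
Proof.
have [gR _ _ Hphi0 [s [Hs1 Hsub]]] := Hstd; have [_ _ Hmul _ _] := gR.
have [_ Iadd Imul] := ideal_span_ideal (Rg 1).
apply: (Hsub r (fun r => exists c, Rg 0%N c /\ ideal_span (Rg 1) (r - c))).
- move=> a; exists (phi a); split; first by apply/Hphi0; exists a.
  by rewrite subrr; case: (ideal_span_ideal (Rg 1)).
- move=> j Hj; exists 0; split; first exact: graded0.
  by rewrite subr0; apply: ideal_span_sub; apply: Hs1.
- move=> x y [c [Hc Hx]] [c' [Hc' Hy]]; exists (c + c'); split; first exact: gradedD.
  by rewrite opprD addrACA; apply: Iadd.
- move=> x y [c [Hc Hx]] [c' [Hc' Hy]]; exists (c * c'); split; first exact: (Hmul 0 0)%N.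
  have -> : x * y - c * c' = x * (y - c') + c' * (x - c) by ring.
  by apply: Iadd; apply: Imul.
Qed.

Lemma homog_in_deg1_span i u : (0 < i)%N -> Rg i u -> ideal_span (Rg 1) u.
Proof.
have [gR _ _ _ _] := Hstd.
move=> i_gt0 Hu; have [c [Hc Hw]] := deg0_plus_deg1_span u.
have u_c : deg0_comp Rg u c.
  have := deg0_compD gR (deg0_comp_deg0 gR Hc) (deg1_span_deg0_comp gR Hw).
  by rewrite addr0 addrC subrK.
by move: Hw; rewrite (deg0_comp_unique gR u_c (deg0_comp_homog gR i_gt0 Hu)) subr0.
Qed.

Lemma Rplus_in_deg1_span r : Rplus Rg r -> ideal_span (Rg 1) r.
Proof.
move=> [N [f [Hf f0 ->]]]; apply: ideal_sum; first exact: ideal_span_ideal.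
case=> [|i] _; first by rewrite f0; case: (ideal_span_ideal (Rg 1)).
exact: (homog_in_deg1_span (ltn0Sn i) (Hf i.+1)).
Qed.

Lemma prod_Rplus_in_span (rs : seq R) :
    (forall i, (i < size rs)%N -> Rplus Rg rs`_i) ->
  ideal_span (Rg (size rs)) (\prod_(r <- rs) r).
Proof.
have [gR _ _ _ _] := Hstd; have [_ Rg1 Hmul _ _] := gR.
elim: rs => [|a l IH] Hrs; first by rewrite big_nil; apply: ideal_span_sub.
rewrite big_cons /= -add1n; apply: (ideal_span_mul (Hmul 1%N _)).
- exact: Rplus_in_deg1_span (Hrs 0%N _).
- by apply: IH => i; apply: (Hrs i.+1).
Qed.

End StandardGraded.

Section AssociatedPrimes.
Variables (A R : comNzRingType) (phi : {rmorphism A -> R}) (X : lmodType R).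

Lemma isAss_sub (S T : X -> Prop) p :
  (forall x, S x -> T x) -> isAss phi S p -> isAss phi T p.
Proof. by move=> ST [Hp [x [Sx Hann]]]; split => //; exists x; split => //; apply: ST. Qed.

Lemma isAss_ext (S : X -> Prop) (p q : A -> Prop) :
  (forall a, p a <-> q a) -> isAss phi S p -> isAss phi S q.
Proof.
move=> pq; have -> // : p = q.
by apply: functional_extensionality => a; apply: propositional_extensionality.
Qed.

Variables (p : A -> Prop) (x : X).
Hypothesis p_prime : prime_ideal p.

Lemma prime_mul_notin s t : ~ p s -> ~ p t -> ~ p (s * t).
Proof. by case: p_prime => _ _ pmul ns nt /pmul []. Qed.

(* The kernel of r |-> r x after inverting A \ p. *)
Definition loc_ann (r : R) : Prop := exists t, ~ p t /\ (phi t * r) *: x = 0.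

Lemma loc_ann_ideal : is_ideal loc_ann.
Proof.
have [_ p1 _] := p_prime.
split=> [|a b [t [nt Ht]] [t' [nt' Ht']]|a b [t [nt Ht]]].
- by exists 1; split => //; rewrite mulr0 scale0r.
- exists (t * t'); split; first exact: prime_mul_notin.
  rewrite rmorphM mulrDr scalerDl (mulrC (phi t)) -!mulrA -scalerA Ht scaler0 add0r.
  by rewrite mulrCA -scalerA Ht' scaler0.
- by exists t; split => //; rewrite mulrCA -scalerA Ht scaler0.
Qed.

Lemma loc_ann_uniform :
  noetherian R -> exists t, ~ p t /\ forall r, loc_ann r -> (phi t * r) *: x = 0.
Proof.
move=> noethR; have [gs Hgs] := noethR _ loc_ann_ideal.
have gen_loc i : (i < size gs)%N -> loc_ann gs`_i.
  move=> Hi; apply/Hgs; exists (fun j => if j == i then 1 else 0).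
  rewrite (bigD1 (Ordinal Hi)) //= eqxx mul1r big1 ?addr0 // => j Hj.
  by rewrite ifF ?mul0r //; apply: contraNF Hj => /eqP ji; apply/eqP/val_inj.
have common M : (M <= size gs)%N ->
    exists t, ~ p t /\ forall i, (i < M)%N -> (phi t * gs`_i) *: x = 0.
  elim: M => [|M IH] HM; first by exists 1; split => //; case: p_prime.
  have [t [nt Ht]] := IH (ltnW HM); have [t' [nt' Ht']] := gen_loc M HM.
  exists (t * t'); split; first exact: prime_mul_notin.
  move=> i; rewrite ltnS leq_eqVlt rmorphM => /orP [/eqP -> | iM].
  - by rewrite -mulrA -scalerA Ht' scaler0.
  - by rewrite (mulrC (phi t)) -mulrA -scalerA Ht // scaler0.
have [t [nt Ht]] := common _ (leqnn (size gs)).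
exists t; split => // r /Hgs [c ->]; rewrite mulr_sumr scaler_suml big1 // => i _.
by rewrite mulrCA -scalerA Ht ?scaler0.
Qed.

Hypothesis ann_x : forall a, p a <-> phi a *: x = 0.

Lemma ann_scale_notin_loc_ann u :
  ~ loc_ann u -> forall a, p a <-> phi a *: (u *: x) = 0.
Proof.
move=> nloc a; split=> [pa|Hu].
- by rewrite scalerA mulrC -scalerA (proj1 (ann_x a) pa) scaler0.
- by apply: NNPP => npa; apply: nloc; exists a; split; rewrite // -scalerA.
Qed.

Lemma ann_scale_notin_prime t : ~ p t -> forall a, p a <-> phi a *: (phi t *: x) = 0.
Proof.
have [[_ _ pabsorb] _ pprime] := p_prime.
move=> nt a; rewrite scalerA -rmorphM; split=> [pa|].
- by apply/ann_x; rewrite mulrC; apply: pabsorb.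
- by move/ann_x/pprime => [].
Qed.

End AssociatedPrimes.

Section Eventually.

Definition eventually_decided (P : int -> Prop) (B : int) : Prop :=
  (forall n, B <= n -> P n) \/ (forall n, B <= n -> ~ P n).

Lemma eventually_decided_le P B B' :
  B <= B' -> eventually_decided P B -> eventually_decided P B'.
Proof. by move=> BB' [H|H]; [left|right] => n Hn; apply: H; apply: le_trans Hn. Qed.

Lemma eventually_decided_uniform (P : nat -> int -> Prop) M :
    (forall i, exists B, eventually_decided (P i) B) ->
  exists B, forall i, (i < M)%N -> eventually_decided (P i) B.
Proof.
move=> HP; elim: M => [|M [B HB]]; first by exists 0.
have [B' HB'] := HP M; exists (Num.max B B') => i.
rewrite ltnS leq_eqVlt => /orP [/eqP -> | iM].
- by apply: eventually_decided_le HB'; rewrite le_max lexx orbT.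
- by apply: eventually_decided_le (HB i iM); rewrite le_max lexx.
Qed.

Lemma eventually_decided_transfer P B n1 n2 :
  eventually_decided P B -> B <= n1 -> B <= n2 -> P n1 -> P n2.
Proof. by move=> [H|H] Hn1 Hn2 Pn1; [apply: H | case: (H n1)]. Qed.

End Eventually.

Section GradedModule.
Variables (A R : comNzRingType) (phi : {rmorphism A -> R}) (Rg : nat -> R -> Prop).
Variables (X : lmodType R) (Xg : int -> X -> Prop).
Hypotheses (Hstd : standard_graded phi Rg) (Hmod : starModf phi Rg Xg).

Lemma isAss_propagate (p : A -> Prop) (n n' : int) (x : X) :
    prime_ideal p -> Xg n x -> (forall a, p a <-> phi a *: x = 0) -> n <= n' ->
    ~ isAss phi (fun y => H0 Rg y /\ Xg n y) p ->
  isAss phi (Xg n') p.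
Proof.
move=> p_prime Xx ann_x nn' notH; have [[_ Hscal _ _] _ _] := Hmod.
have [_ noethR _ Hphi0 _] := Hstd.
apply: NNPP => notAss.
pose k := `|n' - n|%N.
have Hk : k%:Z + n = n' by rewrite /k gez0_abs ?subr_ge0 // subrK.
have deg_k_loc u : Rg k u -> loc_ann phi p x u.
  move=> Ru; apply: NNPP => nloc; apply: notAss; split => //.
  exists (u *: x); split; first by rewrite -Hk; exact: Hscal.
  exact: ann_scale_notin_loc_ann.
have [t [nt Ht]] := loc_ann_uniform phi x p_prime noethR.
apply: notH; split => //; exists (phi t *: x); split; last first.
  exact: ann_scale_notin_prime.
split.
- exists k => rs size_rs Hrs; rewrite scalerA mulrC; apply: Ht.
  apply: (prod_Rplus_in_span Hstd Hrs); first exact: loc_ann_ideal.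
  by rewrite size_rs.
- have Rt : Rg 0%N (phi t) by apply/Hphi0; exists t.
  by have := Hscal 0%N n (phi t) x Rt Xx; rewrite add0r.
Qed.

Lemma isAss_eventually_decided (m : int) :
    (forall n : int, m <= n ->
       Ass_eq phi (fun x => H0 Rg x /\ Xg n x) (fun x => H0 Rg x /\ Xg m x)) ->
  forall p, exists B, eventually_decided (fun n => isAss phi (Xg n) p) B.
Proof.
move=> Hstab p.
have [Hm|Hm] := classic (isAss phi (fun x => H0 Rg x /\ Xg m x) p).
  by exists m; left => n Hn; apply: isAss_sub (proj2 (Hstab n Hn p) Hm) => x [].
have [[n [mn [p_prime [x [Xx ann_x]]]]]|Hno] :=
  classic (exists n, m <= n /\ isAss phi (Xg n) p).
- exists n; left => n' nn'; apply: (isAss_propagate p_prime Xx ann_x nn').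
  by move=> /(proj1 (Hstab n mn p)).
- by exists m; right => n Hn HA; apply: Hno; exists n.
Qed.

End GradedModule.

Theorem theorem4p5 (A R : comNzRingType) (phi : {rmorphism A -> R})
    (Rg : nat -> R -> Prop) (X : lmodType R) (Xg : int -> X -> Prop) :
  noetherian A ->
  standard_graded phi Rg ->
  starModf phi Rg Xg ->
  Ass_finite phi (fun _ : X => True) ->
  (exists m : int, forall n : int, m <= n ->
      Ass_eq phi (fun x => H0 Rg x /\ Xg n x) (fun x => H0 Rg x /\ Xg m x)) ->
  exists n0 : int, forall n : int, n0 <= n -> Ass_eq phi (Xg n) (Xg n0).
Proof.
move=> _ Hstd Hmod [N [L HL]] [m Hstab].
have [B HB] : exists B, forall i, (i < N)%N ->
    eventually_decided (fun n => isAss phi (Xg n) (L i)) B.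
  by apply: eventually_decided_uniform => i; apply: isAss_eventually_decided Hstab _.
have transfer n1 n2 p : B <= n1 -> B <= n2 ->
    isAss phi (Xg n1) p -> isAss phi (Xg n2) p.
  move=> Bn1 Bn2 Hp; have [i [Hi pL]] := HL p (isAss_sub (fun _ _ => I) Hp).
  apply: isAss_ext (fun a => iff_sym (pL a)) _.
  exact: eventually_decided_transfer (HB i Hi) Bn1 Bn2 (isAss_ext pL Hp).
by exists B => n Bn p; split; apply: transfer.
Qed.
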